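(* Let $n\ge2$ and let $(1,n,f_2,\dots,f_k)$ with $k\le\lfloor\frac{n-1}2\rfloor$ be a $K$-sequence. Then there is a proper ideal $\Delta\subset B_n$ such that $\mathrm{Bier}(B_n,\Delta)$ has exactly $2n$ vertices and $g_i(\mathrm{Bier}(B_n,\Delta))=f_i$ for $0\le i\le k$ (with $f_0=1,f_1=n$) and $g_i(\mathrm{Bier}(B_n,\Delta))=0$ for $k<i\le\lfloor\frac{n-1}2\rfloor$.
   Context: $B_n$ is the Boolean lattice of subsets of $[1,n]$. A proper ideal $\Delta\subset B_n$ is a nonempty family of subsets of $[1,n]$ closed under taking subsets with $[1,n]\notin\Delta$. The Bier sphere $\mathrm{Bier}(B_n,\Delta)$ is the simplicial complex whose faces are the pairs $(B,C)$ with $B\subsetneq C\subseteq[1,n]$, $B\in\Delta$, $C\notin\Delta$, with $(B',C')$ a face of $(B,C)$ iff $B'\subseteq B$ and $C\subseteq C'$; concretely $(B,C)$ is the vertex set $B\sqcup\{\bar d: d\notin C\}$ on $[1,n]\sqcup\{\bar1,\dots,\bar n\}$, and the face $(B,C)$ has $|B|+n-|C|$ vertices; all facets have $n-1$ vertices. For such a complex $\Gamma$, $f_j(\Gamma)$ is the number of faces with $j$ vertices, $h_i(\Gamma):=\sum_{j=0}^{n-1}(-1)^{i+j}\binom{n-1-j}{n-1-i}f_j(\Gamma)$ ($0\le i\le n-1$; $h_i:=0$ otherwise), and $g_i(\Gamma):=h_i(\Gamma)-h_{i-1}(\Gamma)$. A $K$-sequence is a sequence that is the $f$-vector (numbers of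 faces of each cardinality, starting with the empty face) of some finite simplicial complex. *)

From mathcomp Require Import all_boot all_order all_algebra.
Set Implicit Arguments. Unset Strict Implicit. Unset Printing Implicit Defensive.
Import GRing.Theory Num.Theory.

(* The Boolean lattice B_n is modelled as {set 'I_n} (subsets of [1,n],
   elements indexed 0..n-1). *)

Definition Bn_proper_ideal (n : nat) (D : {set {set 'I_n}}) : Prop :=
  [/\ D != set0,
      (forall B C : {set 'I_n}, B \subset C -> C \in D -> B \in D)
    & [set: 'I_n] \notin D].

Definition bier_face (n : nat) (D : {set {set 'I_n}})
    (p : {set 'I_n} * {set 'I_n}) : bool :=
  [&& p.1 \proper p.2, p.1 \in D & p.2 \notin D].

Definition bier_nverts (n : nat) (p : {set 'I_n} * {set 'I_n}) : nat :=
  #|p.1| + (n - #|p.2|).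

Definition bier_f (n : nat) (D : {set {set 'I_n}}) (j : nat) : nat :=
  #|[set p : {set 'I_n} * {set 'I_n} | bier_face D p && (bier_nverts p == j)]|.

Definition bier_h (n : nat) (D : {set {set 'I_n}}) (i : nat) : int :=
  if i <= n.-1 then
    (\sum_(0 <= j < n) ((-1) ^+ (i + j) * ('C(n.-1 - j, n.-1 - i))%:Z
                        * (bier_f D j)%:Z))%R
  else 0%R.

Definition bier_g (n : nat) (D : {set {set 'I_n}}) (i : nat) : int :=
  match i with
  | 0 => bier_h D 0
  | i'.+1 => (bier_h D i'.+1 - bier_h D i')%R
  end.

Definition simplicial_complex (m : nat) (K : {set {set 'I_m}}) : Prop :=
  K != set0 /\ (forall A B : {set 'I_m}, A \subset B -> B \in K -> A \in K).

(* (f 0, f 1, ..., f k) is a K-sequence: it is the f-vector of some finite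
   simplicial complex (f i = number of faces of cardinality i for i <= k,
   and there are no faces of cardinality > k). *)
Definition K_sequence (k : nat) (f : nat -> nat) : Prop :=
  exists (m : nat) (K : {set {set 'I_m}}),
    simplicial_complex K /\
    (forall i, i <= k -> #|[set A in K | #|A| == i]| = f i) /\
    (forall A, A \in K -> #|A| <= k).

From mathcomp Require Import all_boot all_order all_algebra.
From mathcomp Require Import zify.
Set Implicit Arguments. Unset Strict Implicit. Unset Printing Implicit Defensive.
Import GRing.Theory.

(* With v(B, C) = |B| + n - |C| the number of vertices of a face, the g-vector
   is the coefficient sequence of the polynomial
     (1 - x) h(x) = sum over faces (B, C) of x^v(B,C) (1 - x)^(|C| - |B|).
   Extending this sum to all pairs B ⊆ C with B in D, the binomial theorem
   collapses the sum over C ⊇ B to x^|B|; the extra pairs are those with C in D,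
   which by the same argument (summing over B ⊆ C) contribute x^(n - |C|).
   Hence g_i = #{B in D : |B| = i} - #{C in D : n - |C| = i}, so for an ideal
   whose members have at most k <= (n-1)/2 elements, g_0, ..., g_((n-1)/2) are
   its face numbers.  A complex realising the K-sequence has f_1 = n vertices,
   and relabelling them by [1,n] turns it into such an ideal. *)

Definition down_closed (T : finType) (F : {set {set T}}) : Prop :=
  forall A B : {set T}, A \subset B -> B \in F -> A \in F.

Lemma card_set_ord_le n (A : {set 'I_n}) : #|A| <= n.
Proof. by rewrite -[leqRHS]card_ord max_card. Qed.

Section GeneratingPolynomials.
Local Open Scope ring_scope.

Lemma sum_subsets_binom (R : comPzRingType) (T : finType) (A : {set T}) (x y : R) :
  \sum_(S : {set T} | S \subset A) x ^+ #|S| * y ^+ (#|A| - #|S|) = (x + y) ^+ #|A|.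
Proof.
rewrite addrC exprDn.
rewrite (partition_big (fun S : {set T} => (inord #|S| : 'I_#|A|.+1)) xpredT) //=.
apply: eq_bigr => j _.
rewrite (eq_bigr (fun _ => x ^+ j * y ^+ (#|A| - j))); last first.
  by move=> S /andP[SA /eqP <-]; rewrite inordK // ltnS subset_leq_card.
rewrite sumr_const mulrC -cards_draws; congr (_ *+ _).
apply: eq_card => S; rewrite !inE unfold_in /=.
case SA: (S \subset A) => //=.
have le_SA : (#|S| < #|A|.+1)%N by rewrite ltnS subset_leq_card.
apply/eqP/eqP => [<-|jE]; first by rewrite inordK.
by apply: val_inj; rewrite /= inordK.
Qed.

Lemma coef_1subX_exp (R : comNzRingType) m r :
  ((1 - 'X : {poly R}) ^+ m)`_r = (-1) ^+ r *+ 'C(m, r).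
Proof.
rewrite exprDn coef_sum.
rewrite (eq_bigr (fun l : 'I_m.+1 =>
          if l == r :> nat then (-1) ^+ r *+ 'C(m, r) else 0)); last first.
  move=> l _; rewrite expr1n mul1r coefMn -scaleN1r exprZn coefZ coefXn eq_sym.
  by case: eqP => [->|_]; rewrite ?mulr1 ?mulr0 ?mul0rn.
rewrite -big_mkcond (big_ord1_eq _ (fun _ => (-1) ^+ r *+ 'C(m, r))) /=.
by case: ltnP => // lt_mr; rewrite bin_small ?mulr0n.
Qed.

Lemma coef_sum_Xn (R : nzSemiRingType) (T : finType) (F : {set T}) (d : T -> nat) i :
  (\sum_(B in F) 'X^(d B) : {poly R})`_i = #|[set B in F | d B == i]|%:R.
Proof.
rewrite coef_sum (eq_bigr (fun B => if d B == i then 1 else 0)); last first.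
  by move=> B _; rewrite coefXn eq_sym; case: eqP.
rewrite -big_mkcondr sumr_const; congr (_ *+ _).
by apply: eq_card => B; rewrite !inE.
Qed.

End GeneratingPolynomials.

Section BierGVector.
Local Open Scope ring_scope.
Variables (n : nat) (D : {set {set 'I_n}}).

Definition bier_h_poly : {poly int} :=
  \sum_(p | bier_face D p) 'X^(bier_nverts p) * (1 - 'X) ^+ (n.-1 - bier_nverts p).

Definition bier_pair_poly (p : {set 'I_n} * {set 'I_n}) : {poly int} :=
  'X^(bier_nverts p) * (1 - 'X) ^+ (#|p.2| - #|p.1|).

Lemma bier_face_nverts p : bier_face D p -> (bier_nverts p < n)%N.
Proof.
case/andP => /proper_card lt_12 _; have := card_set_ord_le p.2.
by rewrite /bier_nverts; lia.
Qed.

Lemma coef_bier_h_poly i : (i <= n.-1)%N -> bier_h D i = bier_h_poly`_i.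
Proof.
move=> le_in; rewrite /bier_h le_in big_mkord coef_sum.
set c := fun j : nat => (-1) ^+ (i + j) * 'C(n.-1 - j, n.-1 - i)%:Z.
have coef_term v : (v < n)%N ->
    ('X^v * (1 - 'X) ^+ (n.-1 - v) : {poly int})`_i = c v.
  move=> lt_vn; rewrite coefXnM coef_1subX_exp /c.
  case: ltnP => le_iv; first by rewrite bin_small ?mulr0 //; lia.
  rewrite -bin_sub; last by lia.
  have -> : (i + v = (i - v) + 2 * v)%N by lia.
  have -> : (n.-1 - v - (i - v) = n.-1 - i)%N by lia.
  by rewrite exprD exprM sqrrN !expr1n mulr1 -natz mulr_natr.
rewrite (eq_bigr (fun p => c (bier_nverts p))); last first.
  by move=> p /bier_face_nverts /coef_term.
rewrite (eq_bigr (fun p => \sum_(j < n | j == bier_nverts p :> nat) c j)); last first.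
  move=> p /bier_face_nverts lt_pn.
  by rewrite (big_ord1_eq _ (fun j => c j)) lt_pn.
rewrite (exchange_big_dep xpredT) //=; apply: eq_bigr => j _.
rewrite (eq_bigr (fun _ => c j)); last by move=> p /andP[_ /eqP ->].
rewrite sumr_const -mulr_natr natz; congr (_ * Posz _).
by apply: eq_card => p; rewrite !inE eq_sym.
Qed.

Lemma bier_pair_polyE :
  \sum_(p | bier_face D p) bier_pair_poly p = (1 - 'X) * bier_h_poly.
Proof.
rewrite mulr_sumr; apply: eq_bigr => p /andP[/proper_card lt_12 _].
rewrite /bier_pair_poly mulrCA -exprS; congr (_ * _ ^+ _).
have := card_set_ord_le p.2; rewrite /bier_nverts -subn1.
by move: lt_12; set b := #|p.1|; set c := #|p.2|; clearbody b c; lia.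
Qed.

Lemma bier_g_coef i : (i <= n.-1)%N ->
  bier_g D i = (\sum_(p | bier_face D p) bier_pair_poly p)`_i.
Proof.
move=> le_in; rewrite bier_pair_polyE mulrBl mul1r coefB coefXM.
case: i le_in => [|i] le_in /=; first by rewrite subr0 coef_bier_h_poly.
by rewrite !coef_bier_h_poly //; lia.
Qed.

Lemma sum_bier_pair_poly_supsets (B : {set 'I_n}) :
  \sum_(C : {set 'I_n} | B \subset C) bier_pair_poly (B, C) = 'X^#|B|.
Proof.
rewrite (reindex_inj (@setC_inj _)) /=.
rewrite (eq_bigl (fun S : {set 'I_n} => S \subset ~: B)); last first.
  by move=> S; rewrite subsetC.
have card_setC (S : {set 'I_n}) : #|~: S| = (n - #|S|)%N.
  by rewrite cardsCs setCK card_ord.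
rewrite (eq_bigr (fun S : {set 'I_n} =>
           'X^#|B| * ('X ^+ #|S| * (1 - 'X) ^+ (#|~: B| - #|S|)))); last first.
  move=> S _; rewrite /bier_pair_poly /bier_nverts /= !card_setC.
  have := card_set_ord_le S => le_Sn.
  have -> : (n - (n - #|S|))%N = #|S| by lia.
  have -> : (n - #|S| - #|B|)%N = (n - #|B| - #|S|)%N by lia.
  by rewrite exprD mulrA.
by rewrite -mulr_sumr sum_subsets_binom addrC subrK expr1n mulr1.
Qed.

Lemma sum_bier_pair_poly_subsets (C : {set 'I_n}) :
  \sum_(B : {set 'I_n} | B \subset C) bier_pair_poly (B, C) = 'X^(n - #|C|).
Proof.
rewrite (eq_bigr (fun B : {set 'I_n} =>
           'X^(n - #|C|) * ('X ^+ #|B| * (1 - 'X) ^+ (#|C| - #|B|))));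
  last by move=> B _; rewrite /bier_pair_poly exprD mulrA [X in X * _]mulrC.
by rewrite -mulr_sumr sum_subsets_binom addrC subrK expr1n mulr1.
Qed.

Hypothesis D_closed : down_closed D.

Lemma sum_bier_pair_poly_faces :
  \sum_(p | bier_face D p) bier_pair_poly p =
  \sum_(B in D) 'X^#|B| - \sum_(C in D) 'X^(n - #|C|).
Proof.
set P := fun p : {set 'I_n} * {set 'I_n} => (p.1 \in D) && (p.1 \subset p.2).
have sum_low : \sum_(B in D) 'X^#|B| = \sum_(p | P p) bier_pair_poly p.
  rewrite -(pair_big_dep (mem D) (fun B C : {set 'I_n} => B \subset C)
                         (fun B C => bier_pair_poly (B, C))).
  by apply: eq_bigr => B _; rewrite sum_bier_pair_poly_supsets.
have sum_high : \sum_(C in D) 'X^(n - #|C|) =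
    \sum_(p | P p && (p.2 \in D)) bier_pair_poly p.
  rewrite (eq_bigr (fun C : {set 'I_n} =>
             \sum_(B : {set 'I_n} | B \subset C) bier_pair_poly (B, C)));
    last by move=> C _; rewrite sum_bier_pair_poly_subsets.
  rewrite (exchange_big_dep xpredT) //=.
  rewrite (pair_big_dep xpredT (fun B C : {set 'I_n} => (C \in D) && (B \subset C))
                        (fun B C => bier_pair_poly (B, C))) /=.
  apply: eq_bigl => -[B C]; rewrite /P /=.
  case CD: (C \in D); case BC: (B \subset C); rewrite ?andbF ?andbT //=.
  by rewrite (D_closed BC CD).
rewrite sum_low sum_high (bigID (fun p => p.2 \in D) P) /= addrC addrK.
apply: eq_bigl => -[B C]; rewrite /P /bier_face /= properEneq.
case BD: (B \in D); case CD: (C \in D); rewrite ?andbF ?andbT //=.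
by case: eqVneq => // eq_BC; rewrite eq_BC CD in BD.
Qed.

Lemma bier_gE i : (i <= n.-1)%N ->
  bier_g D i = #|[set B in D | #|B| == i]|%:Z - #|[set C in D | (n - #|C| == i)%N]|%:Z.
Proof.
move=> le_in; rewrite bier_g_coef // sum_bier_pair_poly_faces coefB.
by rewrite (coef_sum_Xn _ _ (fun B : {set 'I_n} => #|B|))
   (coef_sum_Xn _ _ (fun C : {set 'I_n} => n - #|C|)%N) !natz.
Qed.

Lemma bier_g_small_faces i : (i <= n.-1)%N ->
  (forall B, B \in D -> i + #|B| < n)%N ->
  bier_g D i = #|[set B in D | #|B| == i]|%:Z.
Proof.
move=> le_in small; rewrite bier_gE //.
suff -> : [set C in D | (n - #|C| == i)%N] = set0 by rewrite cards0 subr0.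
apply/setP => C; rewrite !inE; apply/andP => -[/small lt_Cn /eqP]; lia.
Qed.

End BierGVector.

Section LowHVector.
Local Open Scope ring_scope.
Variables (n : nat) (D : {set {set 'I_n}}).

Lemma bier_h0 : (0 < n)%N -> bier_h D 0 = (bier_f D 0)%:Z.
Proof.
move=> n_gt0; rewrite /bier_h leq0n (big_ltn n_gt0) big_nat_cond big1 ?addr0.
  by rewrite subn0 binn expr0 !mul1r.
move=> j /andP[/andP[j_gt0 j_lt_n] _].
by rewrite bin_small ?mulr0 ?mul0r //; lia.
Qed.

Lemma bier_h1 : (1 < n)%N ->
  bier_h D 1 = (bier_f D 1)%:Z - (n.-1 * bier_f D 0)%N%:Z.
Proof.
move=> n_gt1; have n_gt0 : (0 < n)%N by lia.
rewrite /bier_h (_ : (1 <= n.-1)%N); last by lia.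
rewrite (big_ltn n_gt0) (big_ltn n_gt1) big_nat_cond big1 ?addr0; last first.
  move=> j /andP[/andP[j_gt1 j_lt_n] _].
  by rewrite bin_small ?mulr0 ?mul0r //; lia.
rewrite subn0 bin_sub ?bin1; last by lia.
rewrite binn addn0 expr1 (_ : (1 + 1 = 2)%N) // sqrrN expr1n mulN1r !mul1r PoszM.
by rewrite addrC mulNr.
Qed.

Lemma bier_f1_from_g : (1 < n)%N ->
  bier_g D 0 = 1 -> bier_g D 1 = n%:Z -> bier_f D 1 = (2 * n)%N.
Proof.
move=> n_gt1; rewrite /= bier_h1 // bier_h0; last by lia.
by move=> f0; rewrite f0 => g1; lia.
Qed.

End LowHVector.

Section Pullback.
Variables (T U : finType) (h : T -> U).
Hypothesis h_inj : injective h.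

Definition pullback (K : {set {set U}}) : {set {set T}} :=
  [set A : {set T} | h @: A \in K].

Lemma mem_pullback (K : {set {set U}}) A : (A \in pullback K) = (h @: A \in K).
Proof. by rewrite inE. Qed.

Lemma pullback_down_closed (K : {set {set U}}) :
  down_closed K -> down_closed (pullback K).
Proof.
by move=> K_closed A B AB; rewrite !mem_pullback; apply: K_closed; apply: imsetS.
Qed.

Lemma imset_preimset_codom (B : {set U}) : B \subset codom h -> h @: (h @^-1: B) = B.
Proof.
move=> /subsetP B_codom; apply/setP => u; apply/imsetP/idP => [[x] | uB].
  by rewrite inE => hx ->.
by have /codomP[x ux] := B_codom u uB; exists x; rewrite // inE -ux.
Qed.

Lemma card_pullback_layer (K : {set {set U}}) i :
  (forall B, B \in K -> B \subset codom h) ->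
  #|[set A in pullback K | #|A| == i]| = #|[set B in K | #|B| == i]|.
Proof.
move=> K_codom; rewrite -(card_imset _ (imset_inj h_inj)).
apply: eq_card => B; rewrite inE; apply/imsetP/andP => [[A] | [BK Bi]].
  by rewrite inE mem_pullback => /andP[AK Ai] ->; rewrite (card_imset _ h_inj).
exists (h @^-1: B); last by rewrite imset_preimset_codom ?K_codom.
by rewrite inE mem_pullback -(card_imset _ h_inj) imset_preimset_codom ?K_codom ?BK.
Qed.

End Pullback.

Definition vertices (U : finType) (K : {set {set U}}) : {set U} :=
  [set v | [set v] \in K].

Lemma card_vertices (U : finType) (K : {set {set U}}) :
  #|vertices K| = #|[set A in K | #|A| == 1]|.
Proof.
rewrite -(card_imset _ (@set1_inj U)).
apply: eq_card => A; rewrite inE; apply/imsetP/andP => [[v] | [AK /cards1P[v Av]]].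
  by rewrite inE => vK ->; rewrite cards1.
by exists v; rewrite // inE -Av.
Qed.

Lemma face_sub_vertices (U : finType) (K : {set {set U}}) (B : {set U}) :
  down_closed K -> B \in K -> B \subset vertices K.
Proof.
move=> K_closed BK; apply/subsetP => v vB; rewrite inE.
by apply: K_closed BK; rewrite sub1set.
Qed.

Lemma ord_injection_onto (U : finType) (V : {set U}) n :
  #|V| = n -> exists2 h : 'I_n -> U, injective h & V \subset codom h.
Proof.
move=> <-; exists enum_val; first exact: enum_val_inj.
by apply/subsetP => v vV; rewrite -(enum_rankK_in vV vV) codom_f.
Qed.

Theorem corollary13 (n k : nat) (f : nat -> nat) :
  2 <= n -> 1 <= k -> k <= (n.-1)./2 ->
  f 0 = 1 -> f 1 = n -> K_sequence k f ->
  exists D : {set {set 'I_n}},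
    [/\ Bn_proper_ideal D,
        bier_f D 1 = (2 * n)%N,
        (forall i, i <= k -> bier_g D i = Posz (f i))
      & (forall i, k < i <= (n.-1)./2 -> bier_g D i = 0%R)].
Proof.
move=> n_gt1 k_gt0 k_le f0 f1 [m [K [[K_nz K_closed] [K_layer K_small]]]].
have [h h_inj V_codom] :
    exists2 h : 'I_n -> 'I_m, injective h & vertices K \subset codom h.
  by apply: ord_injection_onto; rewrite card_vertices K_layer.
pose D : {set {set 'I_n}} := pullback h K.
have D_closed : down_closed D by apply: pullback_down_closed.
have D_small (A : {set 'I_n}) : A \in D -> #|A| <= k.
  by rewrite mem_pullback -(card_imset _ h_inj); apply: K_small.
have D_layer i : i <= k -> #|[set A in D | #|A| == i]| = f i.
  move=> le_ik; rewrite card_pullback_layer -?K_layer // => B BK.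
  exact: subset_trans (face_sub_vertices K_closed BK) V_codom.
have g_layer i : i <= (n.-1)./2 -> bier_g D i = #|[set A in D | #|A| == i]|.
  move=> i_le; apply: bier_g_small_faces => [//||B /D_small le_Bk]; lia.
exists D; split.
- split=> //; last by apply/negP => /D_small; rewrite cardsT card_ord; lia.
  apply/set0Pn; exists set0; rewrite mem_pullback imset0.
  by have [A AK] := set0Pn _ K_nz; apply: K_closed AK; apply: sub0set.
- by apply: bier_f1_from_g; rewrite ?g_layer ?D_layer ?f0 ?f1; lia.
- by move=> i le_ik; rewrite g_layer ?D_layer //; lia.
- move=> i /andP[lt_ki i_le]; rewrite g_layer //.
  apply/eqP; rewrite eqz_nat cards_eq0; apply/eqP/setP => A; rewrite inE in_set0.
  by apply/andP => -[/D_small le_Ak /eqP Ai]; lia.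
Qed.
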